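(* Let $m\ge 2$, and let $\omega=\sum_i\omega_i|e_i\rangle\langle e_i|$ and $\omega'=\sum_i\omega'_i|f_i\rangle\langle f_i|$ be $n$-dimensional density matrices, diagonal in (possibly different) orthonormal bases $\{|e_i\rangle\}$ and $\{|f_i\rangle\}$. Suppose $\omega\otimes\frac{1}{m}\mathbb{I}_m\succ\omega'\otimes|0\rangle\langle 0|$. Then there exists a density matrix $\tilde\omega=\sum_i\tilde\omega_i|e_i\rangle\langle e_i|$, diagonal in the basis $\{|e_i\rangle\}$, such that $d(\omega,\omega')\ge d(\omega,\tilde\omega)$ and $\omega\otimes\frac{1}{m}\mathbb{I}_m\succ\tilde\omega\otimes|0\rangle\langle 0|$.
   Context: For density matrices $\rho,\sigma$, $\rho\succ\sigma$ means that the vector of eigenvalues of $\rho$ majorizes that of $\sigma$ (vectors padded with zeros to equal length): the sum of the $k$ largest eigenvalues of $\rho$ is at least that of $\sigma$ for every $k$. $|0\rangle$ is a unit vector in $\mathbb{C}^m$. The trace distance is $d(\omega,\omega')=\frac12\|\omega-\omega'\|_1$. *)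

(* Scalars: an arbitrary numClosedFieldType C (a model of the complex numbers, e.g. algC). *)
From HB Require Import structures.
From mathcomp Require Import all_boot all_order all_algebra all_field.
Set Implicit Arguments. Unset Strict Implicit. Unset Printing Implicit Defensive.
Import Order.TTheory GRing.Theory Num.Theory.
Local Open Scope ring_scope.

Definition adjmx (C : numClosedFieldType) (p q : nat) (A : 'M[C]_(p, q)) : 'M[C]_(q, p) :=
  (map_mx (@Num.conj C) A)^T.

Definition density (C : numClosedFieldType) (p : nat) (A : 'M[C]_p) : Prop :=
  [/\ adjmx A = A,
      forall v : 'cV[C]_p, 0 <= (adjmx v *m A *m v) ord0 ord0
    & \tr A = 1].

(* a unitary matrix: its columns form an orthonormal basis *)
Definition unitary (C : numClosedFieldType) (p : nat) (U : 'M[C]_p) : Prop := adjmx U *m U = 1%:M.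

(* Kronecker (tensor) product, row-major index convention k = i * q + j *)
Lemma kron_idx1 (p q : nat) (k : 'I_(p * q)) : (k %/ q < p)%N.
Proof.
case: q k => [|q] k; first by case: k => k; rewrite muln0.
by rewrite ltn_divLR // (ltn_ord k).
Qed.
Lemma kron_idx2 (p q : nat) (k : 'I_(p * q)) : (k %% q < q)%N.
Proof.
case: q k => [|q] k; first by case: k => k; rewrite muln0.
by rewrite ltn_pmod.
Qed.
Definition kidx1 p q (k : 'I_(p * q)) : 'I_p := Ordinal (kron_idx1 k).
Definition kidx2 p q (k : 'I_(p * q)) : 'I_q := Ordinal (kron_idx2 k).

Definition kron (C : numClosedFieldType) (p q : nat) (A : 'M[C]_p) (B : 'M[C]_q) : 'M[C]_(p * q) :=
  \matrix_(k, l) (A (kidx1 k) (kidx1 l) * B (kidx2 k) (kidx2 l)).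

(* the eigenvalues (with multiplicity) of a square matrix: a chosen list of
   the roots of its characteristic polynomial *)
Lemma spec_exists (C : numClosedFieldType) (p : nat) (A : 'M[C]_p) :
  exists s : seq C, char_poly A == \prod_(z <- s) ('X - z%:P).
Proof.
have [s Hs] := closed_field_poly_normal (char_poly A).
by exists s; apply/eqP; rewrite {1}Hs (monicP (char_poly_monic A)) scale1r.
Qed.
Definition spec (C : numClosedFieldType) (p : nat) (A : 'M[C]_p) : seq C := xchoose (spec_exists A).

(* sum of the k largest eigenvalues (for Hermitian matrices the eigenvalues
   are real, so the sort is by the usual order); padding with zeros is implicit
   since take k returns the whole list when k exceeds its size *)
Definition topk_sum (C : numClosedFieldType) (p : nat) (A : 'M[C]_p) (k : nat) : C :=
  \sum_(z <- take k (sort (fun x y : C => y <= x) (spec A))) z.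

Definition majorizes (C : numClosedFieldType) (p q : nat) (A : 'M[C]_p) (B : 'M[C]_q) : Prop :=
  forall k : nat, topk_sum B k <= topk_sum A k.

Definition trnorm (C : numClosedFieldType) (p : nat) (A : 'M[C]_p) : C := \sum_(z <- spec A) `|z|.
Definition trdist (C : numClosedFieldType) (p : nat) (A B : 'M[C]_p) : C := trnorm (A - B) / 2%:R.

From HB Require Import structures.
From mathcomp Require Import all_boot all_order all_algebra all_field.
From mathcomp Require Import mxtens.
From mathcomp Require Import ring.
Import Order.TTheory GRing.Theory Num.Theory.
Local Open Scope ring_scope.
Set Implicit Arguments. Unset Strict Implicit. Unset Printing Implicit Defensive.

(* Take for the new state the dephasing of omega' in the eigenbasis {e_i} of omega:
   its weights are the image of the weights of omega' under the doubly stochastic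
   matrix (|<e_i|f_j>|^2).  Dephasing is a pinching, so it does not increase the
   trace norm, which gives the distance inequality.  For majorization we use
   Ky Fan's formula: for a nonnegative spectrum s, the sum of its k largest
   elements is the minimum over t >= 0 of k t + sum_(x in s) (x - t)_+.
   Tensoring with a pure state only adds zero eigenvalues, which do not contribute
   for t >= 0, and x |-> (x - t)_+ is convex, so the dephased state tensored with
   |0><0| is majorized by omega' tensored with |0><0|; transitivity with the
   hypothesis concludes. *)

Section PositivePart.

Variable R : numFieldType.
Implicit Types (x t : R) (s : seq R).

Definition pos_part x := (x + `|x|) / 2%:R.

Definition excess s t := \sum_(x <- s) pos_part (x - t).

Definition topk s k := \sum_(x <- take k (sort (fun x y : R => y <= x) s)) x.

Lemma pos_part_ge x : x \is Num.real -> x <= pos_part x.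
Proof.
move=> xr; rewrite /pos_part ler_pdivlMr ?ltr0n // mulr_natr mulr2n lerD2l.
exact: real_ler_norm.
Qed.

Lemma pos_part_ge0 x : x \is Num.real -> 0 <= pos_part x.
Proof.
move=> xr; rewrite /pos_part divr_ge0 ?ler0n // addrC -lerBlDr sub0r.
by rewrite -normrN real_ler_norm ?rpredN.
Qed.

Lemma ger0_pos_part x : 0 <= x -> pos_part x = x.
Proof.
by move=> x0; rewrite /pos_part ger0_norm // -mulr2n -[x *+ 2]mulr_natr mulfK ?pnatr_eq0.
Qed.

Lemma ler0_pos_part x : x \is Num.real -> x <= 0 -> pos_part x = 0.
Proof. by move=> xr x0; rewrite /pos_part ler0_norm // subrr mul0r. Qed.

Lemma pos_part_sum_le (I : Type) (r : seq I) (c a : I -> R) :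
  (forall i, 0 <= c i) ->
  pos_part (\sum_(i <- r) c i * a i) <= \sum_(i <- r) c i * pos_part (a i).
Proof.
move=> c0; rewrite /pos_part.
under [X in _ <= X]eq_bigr do rewrite mulrA mulrDr.
rewrite -mulr_suml big_split /= ler_wpM2r ?invr_ge0 ?ler0n // lerD2l.
apply: le_trans (ler_norm_sum _ _ _) _.
by apply: ler_sum => i _; rewrite normrM ger0_norm.
Qed.

Lemma excess_ge0 s t : t \is Num.real -> all (fun x => x \is Num.real) s ->
  0 <= excess s t.
Proof.
move=> tr /allP sr; rewrite /excess big_seq; apply: sumr_ge0 => x xs.
by rewrite pos_part_ge0 // rpredB // sr.
Qed.

Lemma sum_take_le_excess s k t : 0 <= t -> all (fun x => x \is Num.real) s ->
  \sum_(x <- take k s) x <= k%:R * t + excess s t.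
Proof.
move=> t0; have tr := ger0_real t0.
elim: s k => [|x s IHs] [|k] sr; rewrite /= ?big_nil ?mul0r ?add0r.
- exact: excess_ge0.
- by rewrite addr_ge0 ?mulr_ge0 ?ler0n ?excess_ge0.
- exact: excess_ge0.
move: sr => /andP[xr sr]; rewrite /excess !big_cons -natr1 mulrDl mul1r.
rewrite [k%:R * t + t]addrC addrACA lerD ?IHs //.
by rewrite -lerBlDl pos_part_ge ?rpredB.
Qed.

Lemma sum_take_excess s k : sorted (fun x y : R => y <= x) s ->
  all (fun x => 0 <= x) s ->
  \sum_(x <- take k s) x = k%:R * nth 0 s k + excess s (nth 0 s k).
Proof.
have ge_trans : transitive (fun x y : R => y <= x).
  by move=> y x z xy yz; apply: le_trans yz xy.
elim: s k => [|x s IHs] k; first by rewrite /excess !big_nil nth_nil mulr0 addr0.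
move=> srt /andP[x0 s0]; have /allP le_x := order_path_min ge_trans srt.
case: k => [|k] /=.
  rewrite big_nil mul0r add0r /excess big_cons subrr ger0_pos_part // add0r.
  rewrite big_seq big1 // => y ys.
  apply: ler0_pos_part; last by rewrite subr_le0 le_x.
  by rewrite rpredB ?ger0_real // (allP s0).
have le_tx : nth 0 s k <= x.
  by case: (ltnP k (size s)) => [/(mem_nth 0)/le_x | /(nth_default 0)->].
rewrite big_cons IHs ?(path_sorted srt) // /excess big_cons -natr1 mulrDl mul1r.
by rewrite ger0_pos_part ?subr_ge0 //; ring.
Qed.

Let ge_sort s := sort (fun x y : R => y <= x) s.

Lemma excess_sort s t : excess (ge_sort s) t = excess s t.
Proof. by apply: perm_big; rewrite perm_sort. Qed.

Lemma topk_le_excess s k t : 0 <= t -> all (fun x => x \is Num.real) s ->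
  topk s k <= k%:R * t + excess s t.
Proof.
move=> t0 sr; rewrite -excess_sort; apply: sum_take_le_excess => //.
by rewrite all_sort.
Qed.

Lemma topk_excess_attained s k : all (fun x => 0 <= x) s ->
  exists2 t, 0 <= t & topk s k = k%:R * t + excess s t.
Proof.
move=> s0; have ss0 : all (fun x => 0 <= x) (ge_sort s) by rewrite all_sort.
exists (nth 0 (ge_sort s) k).
  case: (ltnP k (size (ge_sort s))) => [/(mem_nth 0)/(allP ss0) // | /(nth_default 0)->].
  exact: lexx.
rewrite -excess_sort; apply: sum_take_excess => //.
apply: (sort_sorted_in (P := fun x => 0 <= x)) => // x y x0 y0.
by rewrite orbC real_leVge ?ger0_real.
Qed.

Lemma topk_le_of_excess_le s s' :
  all (fun x => x \is Num.real) s -> all (fun x => 0 <= x) s' ->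
  (forall t, 0 <= t -> excess s t <= excess s' t) ->
  forall k, topk s k <= topk s' k.
Proof.
move=> sr s'0 le_excess k; have [t t0 ->] := topk_excess_attained k s'0.
by apply: le_trans (topk_le_excess k t0 sr) _; rewrite lerD2l le_excess.
Qed.

End PositivePart.

Section DoublyStochastic.

Variables (R : numFieldType) (n : nat).
Implicit Types (S : 'M[R]_n) (a : 'I_n -> R).

Definition doubly_stochastic S :=
  [/\ forall i j, 0 <= S i j, forall i, \sum_j S i j = 1 & forall j, \sum_i S i j = 1].

Lemma sum_doubly_stochastic S a :
  doubly_stochastic S -> \sum_i \sum_j S i j * a j = \sum_j a j.
Proof.
by case=> _ _ colS; rewrite exchange_big; apply: eq_bigr => j _; rewrite -mulr_suml colS mul1r.
Qed.

Lemma doubly_stochastic_sum_le S (phi : R -> R) a : doubly_stochastic S ->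
  (forall c : 'I_n -> R, (forall j, 0 <= c j) ->
     phi (\sum_j c j * a j) <= \sum_j c j * phi (a j)) ->
  \sum_i phi (\sum_j S i j * a j) <= \sum_j phi (a j).
Proof.
move=> dsS phi_convex; have [S_ge0 _ _] := dsS.
rewrite -(sum_doubly_stochastic (fun j => phi (a j)) dsS).
by apply: ler_sum => i _; apply: phi_convex => j; apply: S_ge0.
Qed.

Lemma sum_norm_doubly_stochastic_le S a : doubly_stochastic S ->
  \sum_i `|\sum_j S i j * a j| <= \sum_j `|a j|.
Proof.
move=> dsS; apply: doubly_stochastic_sum_le => // c c0.
apply: le_trans (ler_norm_sum _ _ _) _.
by apply: ler_sum => j _; rewrite normrM ger0_norm.
Qed.

Lemma excess_doubly_stochastic_le S a t : doubly_stochastic S ->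
  \sum_i pos_part (\sum_j S i j * a j - t) <= \sum_j pos_part (a j - t).
Proof.
move=> dsS; have [_ rowS _] := dsS.
have shift i : \sum_j S i j * a j - t = \sum_j S i j * (a j - t).
  by under [RHS]eq_bigr do rewrite mulrBr; rewrite sumrB -mulr_suml rowS mul1r.
under eq_bigr do rewrite shift.
by apply: (doubly_stochastic_sum_le (phi := @pos_part R)) => // c; apply: pos_part_sum_le.
Qed.

End DoublyStochastic.

Section Adjoint.

Variable C : numClosedFieldType.

Lemma adjmx_trmx p q (A : 'M[C]_(p, q)) : adjmx A = map_mx Num.conj A^T.
Proof. exact: map_trmx. Qed.

Lemma adjmxK p q (A : 'M[C]_(p, q)) : adjmx (adjmx A) = A.
Proof. by apply/matrixP=> i j; rewrite !mxE conjCK. Qed.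

Lemma adjmxM p q r (A : 'M[C]_(p, q)) (B : 'M[C]_(q, r)) :
  adjmx (A *m B) = adjmx B *m adjmx A.
Proof. by rewrite /adjmx map_mxM trmx_mul. Qed.

Lemma adjmxB p q (A B : 'M[C]_(p, q)) : adjmx (A - B) = adjmx A - adjmx B.
Proof. by apply/matrixP=> i j; rewrite !mxE rmorphB. Qed.

Lemma adjmx_diag p (d : 'rV[C]_p) : adjmx (diag_mx d) = diag_mx (map_mx Num.conj d).
Proof.
by apply/matrixP=> i j; rewrite !mxE; case: eqVneq => [->|]; rewrite ?mulr1n ?conjC0.
Qed.

Lemma adjmx_tens p q (A : 'M[C]_p) (B : 'M[C]_q) :
  adjmx (A *t B) = adjmx A *t adjmx B.
Proof. by rewrite /adjmx map_mxT trmx_tens. Qed.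

Lemma unitaryC p (U : 'M[C]_p) : unitary U -> U *m adjmx U = 1%:M.
Proof. exact: mulmx1C. Qed.

Lemma unitary_adjmx p (U : 'M[C]_p) : unitary U -> unitary (adjmx U).
Proof. by rewrite /unitary adjmxK; apply: unitaryC. Qed.

Lemma unitaryM p (U V : 'M[C]_p) : unitary U -> unitary V -> unitary (U *m V).
Proof.
by rewrite /unitary adjmxM => UU VV; rewrite mulmxA -(mulmxA _ _ U) UU mulmx1.
Qed.

End Adjoint.

Lemma char_poly_conj (R : comUnitRingType) p (U V D : 'M[R]_p) :
  V *m U = 1%:M -> char_poly (U *m D *m V) = char_poly D.
Proof.
move=> VU; have UV : U *m V = 1%:M by apply: mulmx1C.
rewrite /char_poly /char_poly_mx.
have -> : 'X%:M - map_mx polyC (U *m D *m V) =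
    map_mx polyC U *m ('X%:M - map_mx polyC D) *m map_mx polyC V.
  rewrite mulmxBr mulmxBl !map_mxM; congr (_ - _).
  by rewrite scalar_mxC -mulmxA -map_mxM UV map_mx1 mulmx1.
by rewrite !det_mulmx mulrC mulrA -det_mulmx -map_mxM VU map_mx1 det1 mul1r.
Qed.

Section Spectrum.

Variable C : numClosedFieldType.

Lemma perm_spec_unitary_diag p (U : 'M[C]_p) (d : 'rV[C]_p) : unitary U ->
  perm_eq (spec (U *m diag_mx d *m adjmx U)) [seq d 0 i | i <- enum 'I_p].
Proof.
move=> UU; apply: prod_XsubC_eq.
have /eqP <- := xchooseP (spec_exists (U *m diag_mx d *m adjmx U)).
rewrite char_poly_conj // char_poly_trig ?diag_mx_is_trig // big_map big_enum.
by apply: eq_bigr => i _; rewrite mxE eqxx mulr1n.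
Qed.

Lemma trnorm_unitary_diag p (U : 'M[C]_p) (d : 'rV[C]_p) : unitary U ->
  trnorm (U *m diag_mx d *m adjmx U) = \sum_i `|d 0 i|.
Proof.
by move=> UU; rewrite /trnorm (perm_big _ (perm_spec_unitary_diag d UU)) big_map big_enum.
Qed.

Lemma hermitian_unitary_diag p (H : 'M[C]_p) : adjmx H = H ->
  exists U (d : 'rV[C]_p), unitary U /\ H = U *m diag_mx d *m adjmx U.
Proof.
move=> HH; have H_normal : H \is normalmx by apply/normalmxP; rewrite -adjmx_trmx HH.
have U_unitary := spectral_unitarymx H.
exists (adjmx (spectralmx H)), (spectral_diag H); rewrite adjmxK; split.
  by rewrite /unitary adjmxK adjmx_trmx; apply/unitarymxP.
by rewrite {1}(orthomx_spectralP H_normal) invmx_unitary // adjmx_trmx.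
Qed.

End Spectrum.

Section Dephasing.

Variable C : numClosedFieldType.

Lemma conj_diag_mx_entry a b (K : 'M[C]_(a, b)) (h : 'rV[C]_b) i :
  (K *m diag_mx h *m adjmx K) i i = \sum_j `|K i j| ^+ 2 * h 0 j.
Proof. by rewrite mul_mx_diag !mxE; apply: eq_bigr => j _; rewrite !mxE normCK mulrAC. Qed.

Definition abs2mx p (U : 'M[C]_p) : 'M[C]_p := \matrix_(i, j) `|U i j| ^+ 2.

Lemma abs2mxE p (U : 'M[C]_p) i j : abs2mx U i j = `|U i j| ^+ 2.
Proof. exact: mxE. Qed.

Lemma unitary_doubly_stochastic p (U : 'M[C]_p) :
  unitary U -> doubly_stochastic (abs2mx U).
Proof.
move=> UU; split=> [i j | i | j]; rewrite ?mxE ?exprn_ge0 //.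
- move/matrixP: (unitaryC UU) => /(_ i i); rewrite !mxE eqxx mulr1n => <-.
  by apply: eq_bigr => j _; rewrite !mxE normCK.
- move/matrixP: UU => /(_ j j); rewrite !mxE eqxx mulr1n => <-.
  by apply: eq_bigr => i _; rewrite !mxE normCK mulrC.
Qed.

Lemma densityP_unitary_diag p (U : 'M[C]_p) (d : 'rV[C]_p) : unitary U ->
  density (U *m diag_mx d *m adjmx U) <-> (forall i, 0 <= d 0 i) /\ \sum_i d 0 i = 1.
Proof.
move=> UU; have trE : \tr (U *m diag_mx d *m adjmx U) = \sum_i d 0 i.
  by rewrite mxtrace_mulC mulmxA UU mul1mx mxtrace_diag.
have quadE v : adjmx v *m (U *m diag_mx d *m adjmx U) *m v =
    adjmx (adjmx U *m v) *m diag_mx d *m adjmx (adjmx (adjmx U *m v)).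
  by rewrite adjmxK adjmxM adjmxK !mulmxA.
split=> [[_ psd tr1] | [d0 sum1]]; last split.
- split; last by rewrite -trE.
  move=> j; have := psd (U *m delta_mx j 0).
  rewrite quadE mulmxA UU mul1mx conj_diag_mx_entry.
  rewrite (bigD1 j) //= big1 => [|i /negbTE ij]; rewrite !mxE ?ij ?eqxx.
    by rewrite conjC1 normr1 expr1n mul1r addr0.
  by rewrite conjC0 normr0 expr0n mul0r.
- rewrite !adjmxM adjmxK adjmx_diag mulmxA; congr (_ *m _ *m _); congr diag_mx.
  by apply/rowP=> i; rewrite mxE geC0_conj.
- move=> v; rewrite quadE conj_diag_mx_entry.
  by apply: sumr_ge0 => j _; rewrite mulr_ge0 ?exprn_ge0.
- by rewrite trE.
Qed.

End Dephasing.

Lemma sum_norm_diag_le_trnorm (C : numClosedFieldType) p (E H : 'M[C]_p) :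
  unitary E -> adjmx H = H -> \sum_i `|(adjmx E *m H *m E) i i| <= trnorm H.
Proof.
move=> UE HH; have [U [h [UU ->]]] := hermitian_unitary_diag HH.
set K := adjmx E *m U; have UK : unitary K by apply: unitaryM (unitary_adjmx UE) UU.
have -> : adjmx E *m (U *m diag_mx h *m adjmx U) *m E = K *m diag_mx h *m adjmx K.
  by rewrite adjmxM adjmxK !mulmxA.
rewrite trnorm_unitary_diag //.
under eq_bigr do rewrite conj_diag_mx_entry.
under eq_bigr do under eq_bigr do rewrite -abs2mxE.
exact: sum_norm_doubly_stochastic_le (unitary_doubly_stochastic UK).
Qed.

Lemma sum_mxtens_unindex (R : nmodType) p q (F : 'I_p -> 'I_q -> R) :
  \sum_(k < p * q) F (mxtens_unindex k).1 (mxtens_unindex k).2 = \sum_i \sum_j F i j.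
Proof.
rewrite pair_big (reindex (@mxtens_index p q)).
  by apply: eq_bigr => ij _; rewrite mxtens_indexK.
by exists (@mxtens_unindex p q) => k _; rewrite ?mxtens_indexK ?mxtens_unindexK.
Qed.

Section Kronecker.

Variable C : numClosedFieldType.

Lemma kron_tensmx p q (A : 'M[C]_p) (B : 'M[C]_q) : kron A B = A *t B.
Proof. by apply/matrixP=> i j; rewrite !mxE; congr (A _ _ * B _ _); apply: val_inj. Qed.

Lemma tensmx_diag p q (d : 'rV[C]_p) (e : 'rV[C]_q) :
  diag_mx d *t diag_mx e =
  diag_mx (\row_k (d 0 (mxtens_unindex k).1 * e 0 (mxtens_unindex k).2)).
Proof.
apply/matrixP=> i j.
case: (mxtens_indexP i) => i1 i2; case: (mxtens_indexP j) => j1 j2.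
rewrite !mxE !mxtens_indexK (can_eq (@mxtens_indexK p q)) xpair_eqE /=.
by case: eqVneq => [->|]; case: eqVneq => [->|] //=; rewrite ?mulr0n ?mulr0 ?mul0r.
Qed.

Lemma tensmx11 p q : (1%:M : 'M[C]_p) *t (1%:M : 'M[C]_q) = 1%:M.
Proof.
rewrite -!diag_const_mx tensmx_diag; congr diag_mx.
by apply/rowP=> k; rewrite !mxE mulr1.
Qed.

Lemma unitary_tensmx p q (U : 'M[C]_p) (W : 'M[C]_q) :
  unitary U -> unitary W -> unitary (U *t W).
Proof. by rewrite /unitary adjmx_tens tensmx_mul => -> ->; apply: tensmx11. Qed.

Lemma perm_spec_kron_unitary_diag p q (U : 'M[C]_p) (d : 'rV[C]_p)
    (W : 'M[C]_q) (e : 'rV[C]_q) :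
  unitary U -> unitary W ->
  perm_eq (spec (kron (U *m diag_mx d *m adjmx U) (W *m diag_mx e *m adjmx W)))
    [seq d 0 (mxtens_unindex k).1 * e 0 (mxtens_unindex k).2 | k <- enum 'I_(p * q)].
Proof.
move=> UU UW; rewrite kron_tensmx -!tensmx_mul tensmx_diag -adjmx_tens.
have := perm_spec_unitary_diag (\row_k (d 0 (mxtens_unindex k).1 * e 0 (mxtens_unindex k).2))
  (unitary_tensmx UU UW).
by under eq_map do rewrite mxE.
Qed.

Lemma unit_proj_unitary_diag q (v : 'cV[C]_q) : adjmx v *m v = 1%:M ->
  exists W (e : 'rV[C]_q), [/\ unitary W, v *m adjmx v = W *m diag_mx e *m adjmx W,
    forall j, e 0 j = 0 \/ e 0 j = 1 & \sum_j e 0 j = 1].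
Proof.
move=> vv; have [W [e [UW vvE]]] : exists W (e : 'rV[C]_q),
    unitary W /\ v *m adjmx v = W *m diag_mx e *m adjmx W.
  by apply: hermitian_unitary_diag; rewrite adjmxM adjmxK.
have eE : diag_mx e = adjmx W *m (v *m adjmx v) *m W.
  by rewrite vvE !mulmxA UW mul1mx -mulmxA UW mulmx1.
exists W, e; split=> // [j|].
- have : diag_mx e *m diag_mx e = diag_mx e.
    rewrite eE !mulmxA -(mulmxA _ W) unitaryC // mulmx1.
    by rewrite -(mulmxA (adjmx W *m v) (adjmx v) v) vv mulmx1.
  move/matrixP => /(_ j j); rewrite mul_diag_mx !mxE eqxx mulr1n => /eqP.
  rewrite -subr_eq0 -{3}(mulr1 (e 0 j)) -mulrBr mulf_eq0 subr_eq0.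
  by case/orP => /eqP ->; [left | right].
- have := congr1 mxtrace eE; rewrite mxtrace_diag => ->.
  by rewrite mxtrace_mulC !mulmxA unitaryC // mul1mx mxtrace_mulC vv mxtrace1.
Qed.

End Kronecker.

Section KroneckerProjector.

Variables (C : numClosedFieldType) (p q : nat).
Variables (U : 'M[C]_p) (d : 'rV[C]_p) (v : 'cV[C]_q).
Hypotheses (UU : unitary U) (vv : adjmx v *m v = 1%:M) (d_ge0 : forall i, 0 <= d 0 i).

Let rho := kron (U *m diag_mx d *m adjmx U) (v *m adjmx v).

Lemma spec_kron_proj_ge0 : all (fun x => 0 <= x) (spec rho).
Proof.
have [W [e [UW vvE e01 _]]] := unit_proj_unitary_diag vv.
rewrite /rho vvE (perm_all _ (perm_spec_kron_unitary_diag d e UU UW)).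
apply/allP=> _ /mapP[k _ ->].
by case: (e01 (mxtens_unindex k).2) => ->; rewrite ?mulr0 ?mulr1.
Qed.

Lemma excess_spec_kron_proj t : 0 <= t ->
  excess (spec rho) t = \sum_i pos_part (d 0 i - t).
Proof.
move=> t0; have [W [e [UW vvE e01 e_sum1]]] := unit_proj_unitary_diag vv.
rewrite /rho vvE /excess (perm_big _ (perm_spec_kron_unitary_diag d e UU UW)).
rewrite big_map big_enum /=.
rewrite (sum_mxtens_unindex (fun i j => pos_part (d 0 i * e 0 j - t))); apply: eq_bigr => i _.
rewrite -[RHS]mul1r -e_sum1 mulr_suml; apply: eq_bigr => j _.
case: (e01 j) => ->; rewrite ?mulr1 ?mul1r // mulr0 mul0r sub0r.
by rewrite ler0_pos_part ?rpredN ?ger0_real // oppr_le0.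
Qed.

End KroneckerProjector.

Lemma majorizes_kron_proj (C : numClosedFieldType) p q (U V : 'M[C]_p) (a b : 'rV[C]_p)
    (v : 'cV[C]_q) :
  unitary U -> unitary V -> adjmx v *m v = 1%:M ->
  (forall i, 0 <= a 0 i) -> (forall i, 0 <= b 0 i) ->
  (forall t, 0 <= t -> \sum_i pos_part (b 0 i - t) <= \sum_i pos_part (a 0 i - t)) ->
  majorizes (kron (U *m diag_mx a *m adjmx U) (v *m adjmx v))
            (kron (V *m diag_mx b *m adjmx V) (v *m adjmx v)).
Proof.
move=> UU UV vv a0 b0 le_excess k; apply: topk_le_of_excess_le.
- by apply: sub_all (spec_kron_proj_ge0 UV vv b0) => x; apply: ger0_real.
- exact: spec_kron_proj_ge0.
- by move=> t t0; rewrite !excess_spec_kron_proj // le_excess.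
Qed.

Unset Implicit Arguments.

Theorem mainTheorem2 (C : numClosedFieldType) (n m : nat) (hm : (2 <= m)%N)
  (E F : 'M[C]_n) (w w' : 'rV[C]_n) (v0 : 'cV[C]_m) :
  unitary E -> unitary F -> adjmx v0 *m v0 = 1%:M ->
  density (E *m diag_mx w *m adjmx E) ->
  density (F *m diag_mx w' *m adjmx F) ->
  majorizes (kron (E *m diag_mx w *m adjmx E) (m%:R^-1 *: (1%:M : 'M[C]_m)))
            (kron (F *m diag_mx w' *m adjmx F) (v0 *m adjmx v0)) ->
  exists wt : 'rV[C]_n,
    [/\ density (E *m diag_mx wt *m adjmx E),
        trdist (E *m diag_mx w *m adjmx E) (E *m diag_mx wt *m adjmx E)
          <= trdist (E *m diag_mx w *m adjmx E) (F *m diag_mx w' *m adjmx F)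
      & majorizes (kron (E *m diag_mx w *m adjmx E) (m%:R^-1 *: (1%:M : 'M[C]_m)))
                  (kron (E *m diag_mx wt *m adjmx E) (v0 *m adjmx v0))].
Proof.
move=> UE UF vv dE dF maj.
set rho := E *m diag_mx w *m adjmx E; set rho' := F *m diag_mx w' *m adjmx F.
set G := adjmx E *m F; have dsG := unitary_doubly_stochastic (unitaryM (unitary_adjmx UE) UF).
have [w'_ge0 w'_sum1] := (densityP_unitary_diag w' UF).1 dF.
pose wt : 'rV[C]_n := \row_i \sum_j abs2mx G i j * w' 0 j.
have wt_ge0 i : 0 <= wt 0 i.
  by case: dsG => G_ge0 _ _; rewrite mxE sumr_ge0 // => j _; rewrite mulr_ge0.
have diag_rhoE i : (adjmx E *m rho *m E) i i = w 0 i.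
  by rewrite !mulmxA UE mul1mx -mulmxA UE mulmx1 mxE eqxx mulr1n.
have diag_rho'E i : (adjmx E *m rho' *m E) i i = wt 0 i.
  have -> : adjmx E *m rho' *m E = G *m diag_mx w' *m adjmx G.
    by rewrite /G adjmxM adjmxK !mulmxA.
  by rewrite conj_diag_mx_entry mxE; under [RHS]eq_bigr do rewrite abs2mxE.
have diag_diffE i : (adjmx E *m (rho - rho') *m E) i i = (w - wt) 0 i.
  rewrite mulmxBr mulmxBl [LHS]mxE [(- _ : 'M[C]_n) i i]mxE diag_rhoE diag_rho'E.
  by rewrite [RHS]mxE [(- _ : 'rV[C]_n) 0 i]mxE.
exists wt; split.
- apply/densityP_unitary_diag => //; split => //.
  by rewrite -w'_sum1; under eq_bigr do rewrite mxE; apply: sum_doubly_stochastic.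
- rewrite /trdist ler_wpM2r ?invr_ge0 ?ler0n //.
  have -> : rho - E *m diag_mx wt *m adjmx E = E *m diag_mx (w - wt) *m adjmx E.
    by rewrite linearB /= mulmxBr mulmxBl.
  rewrite trnorm_unitary_diag //; under eq_bigr do rewrite -diag_diffE.
  by apply: sum_norm_diag_le_trnorm; rewrite // adjmxB; case: dE => ->; case: dF => ->.
- move=> k; apply: le_trans (maj k); apply: majorizes_kron_proj => // t _.
  under eq_bigr do rewrite mxE.
  exact: excess_doubly_stochastic_le.
Qed.
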